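(* The class of $(\circ,\wedge,\mathsf{A})$-algebras that are completely representable by partial functions is a basic elementary class, i.e. it is the class of models of a single first-order sentence; moreover this sentence can be taken to be of universal-existential-universal form.
   Context: A $(\circ,\wedge,\mathsf{A})$-algebra is a set with two binary operations $\circ,\wedge$ and one unary operation $\mathsf{A}$. An algebra of partial functions of this signature is a set of partial functions, with base $X$ the union of all their domains and ranges, closed under: composition $f\circ g=\{(x,z)\mid \exists y\,(x,y)\in f,(y,z)\in g\}$ (apply $f$ first, then $g$); intersection; antidomain $\mathsf{A}(f)=\{(x,x)\mid x\in X, x\notin\mathrm{dom}(f)\}$. A representation by partial functions is an isomorphism onto such an algebra. The order is $a\le b\iff a\wedge b=a$. A representation $\theta$ is complete if for every $S$ with $\bigvee S$ existing, $\theta(\bigvee S)=\bigcup\theta[S]$ (equivalently, for every nonempty $S$ with $\bigwedge S$ existing, $\theta(\bigwedge S)=\bigcap\theta[S]$); an algebra is completely representable if it has a complete representation. It may be used that the class of $(\circ,\wedge,\mathsf{A})$-algebras representable by partial functions is a finitely axiomatisable variety (Jackson and Stokes). *)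

From Stdlib Require Import List Arith.
Import ListNotations.

Record CMAStruct := {
  carrier :> Type;
  op_comp : carrier -> carrier -> carrier;  (* f ∘ g : apply f first, then g *)
  op_meet : carrier -> carrier -> carrier;
  op_ant  : carrier -> carrier
}.

Definition leA (M : CMAStruct) (a b : M) : Prop := op_meet M a b = a.

Definition is_lub (M : CMAStruct) (S : M -> Prop) (j : M) : Prop :=
  (forall s, S s -> leA M s j) /\
  (forall u, (forall s, S s -> leA M s u) -> leA M j u).

Definition rel (X : Type) := X -> X -> Prop.
Definition functional {X} (f : rel X) : Prop :=
  forall x y z, f x y -> f x z -> y = z.
Definition rel_eq {X} (f g : rel X) : Prop := forall x y, f x y <-> g x y.
Definition rcomp {X} (f g : rel X) : rel X :=
  fun x z => exists y, f x y /\ g y z.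
Definition rmeet {X} (f g : rel X) : rel X := fun x y => f x y /\ g x y.
(** antidomain relative to the whole base X *)
Definition rant {X} (f : rel X) : rel X :=
  fun x y => x = y /\ ~ (exists z, f x z).

(** A representation by partial functions: an injective map into partial
    functions on X preserving the operations, where X is exactly the base,
    i.e. the union of all domains and ranges of the represented functions. *)
Definition representation (M : CMAStruct) (X : Type) (th : M -> rel X) : Prop :=
  (forall a, functional (th a)) /\
  (forall a b, rel_eq (th a) (th b) -> a = b) /\
  (forall a b, rel_eq (th (op_comp M a b)) (rcomp (th a) (th b))) /\
  (forall a b, rel_eq (th (op_meet M a b)) (rmeet (th a) (th b))) /\
  (forall a, rel_eq (th (op_ant M a)) (rant (th a))) /\
  (forall x : X, exists a y, th a x y \/ th a y x).

Definition complete_rep (M : CMAStruct) (X : Type) (th : M -> rel X) : Prop :=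
  forall (S : M -> Prop) (j : M), is_lub M S j ->
    rel_eq (th j) (fun x y => exists s, S s /\ th s x y).

Definition completely_representable (M : CMAStruct) : Prop :=
  exists (X : Type) (th : M -> rel X), representation M X th /\ complete_rep M X th.

Inductive term :=
  | tvar : nat -> term
  | tcomp : term -> term -> term
  | tmeet : term -> term -> term
  | tant : term -> term.

Inductive formula :=
  | fEq : term -> term -> formula
  | fFalse : formula
  | fNot : formula -> formula
  | fAnd : formula -> formula -> formula
  | fOr : formula -> formula -> formula
  | fImp : formula -> formula -> formula
  | fAll : nat -> formula -> formula
  | fEx : nat -> formula -> formula.

Fixpoint tvars (t : term) : list nat :=
  match t with
  | tvar n => [n]
  | tcomp t1 t2 | tmeet t1 t2 => tvars t1 ++ tvars t2
  | tant t1 => tvars t1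
  end.

Fixpoint fvars (p : formula) : list nat :=
  match p with
  | fEq t1 t2 => tvars t1 ++ tvars t2
  | fFalse => []
  | fNot q => fvars q
  | fAnd q r | fOr q r | fImp q r => fvars q ++ fvars r
  | fAll n q | fEx n q => filter (fun m => negb (Nat.eqb m n)) (fvars q)
  end.

Definition sentence (p : formula) : Prop := fvars p = [].

Fixpoint tval (M : CMAStruct) (e : nat -> M) (t : term) : M :=
  match t with
  | tvar n => e n
  | tcomp t1 t2 => op_comp M (tval M e t1) (tval M e t2)
  | tmeet t1 t2 => op_meet M (tval M e t1) (tval M e t2)
  | tant t1 => op_ant M (tval M e t1)
  end.

Definition upd (M : CMAStruct) (e : nat -> M) (n : nat) (v : M) : nat -> M :=
  fun m => if Nat.eqb m n then v else e m.

Fixpoint sat (M : CMAStruct) (e : nat -> M) (p : formula) : Prop :=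
  match p with
  | fEq t1 t2 => tval M e t1 = tval M e t2
  | fFalse => False
  | fNot q => ~ sat M e q
  | fAnd q r => sat M e q /\ sat M e r
  | fOr q r => sat M e q \/ sat M e r
  | fImp q r => sat M e q -> sat M e r
  | fAll n q => forall v : M, sat M (upd M e n v) q
  | fEx n q => exists v : M, sat M (upd M e n v) q
  end.

Definition models (M : CMAStruct) (p : formula) : Prop :=
  forall e : nat -> M, sat M e p.

Fixpoint quantifier_free (p : formula) : Prop :=
  match p with
  | fEq _ _ | fFalse => True
  | fNot q => quantifier_free q
  | fAnd q r | fOr q r | fImp q r => quantifier_free q /\ quantifier_free r
  | fAll _ _ | fEx _ _ => False
  end.

Fixpoint foralls (l : list nat) (p : formula) : formula :=
  match l with [] => p | n :: l' => fAll n (foralls l' p) end.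
Fixpoint existss (l : list nat) (p : formula) : formula :=
  match l with [] => p | n :: l' => fEx n (existss l' p) end.

Definition AEA_form (p : formula) : Prop :=
  exists (xs ys zs : list nat) (q : formula),
    quantifier_free q /\ p = foralls xs (existss ys (foralls zs q)).

From Stdlib Require Import List Classical ProofIrrelevance.
Import ListNotations.

(* A complete representation is atomic: a pair (p, q) of an element d lies in an atom below d,
   for otherwise d would be the join of its elements whose domain avoids p, and completeness
   would put (p, q) into one of them.  Conversely, if the algebra is atomic and satisfies a finite
   list of laws valid for partial functions, then a acts on the set of atoms by x |-> x o a, and
   this is a representation.  It is complete as soon as for every atom y and element j some u
   with y o u = 0 contains every s <= j with y o s = 0.  Atomicity and this last condition hold in
   every complete representation, and together with the laws they form a single
   forall-exists-forall sentence. *)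

(* [A t o t] is the empty function, whatever [t] is. *)
Definition zeroA (M : CMAStruct) (t : M) : M := op_comp M (op_ant M t) t.
Definition domA (M : CMAStruct) (a : M) : M := op_ant M (op_ant M a).
Definition atomA (M : CMAStruct) (z x : M) : Prop :=
  x <> z /\ forall w, leA M w x -> w = z \/ w = x.

Definition zeroT (t : term) : term := tcomp (tant t) t.
Definition domT (t : term) : term := tant (tant t).
Definition fLe (s u : term) : formula := fEq (tmeet s u) s.
Definition fNe (s u : term) : formula := fNot (fEq s u).

Section Sentence.

(* Variables 0-2 are universal, 3-5 existential, 6-10 universal again. *)
Local Notation c := (tvar 0).
Local Notation y := (tvar 1).
Local Notation j := (tvar 2).
Local Notation x := (tvar 3).
Local Notation u := (tvar 4).
Local Notation v := (tvar 5).
Local Notation w := (tvar 6).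
Local Notation s := (tvar 7).
Local Notation a := (tvar 8).
Local Notation b := (tvar 9).
Local Notation t := (tvar 10).

Definition atomic_formula : formula :=
  fOr (fEq c (zeroT c))
      (fAnd (fNe (tcomp x c) (zeroT c)) (fImp (fLe w x) (fOr (fEq w (zeroT c)) (fEq w x)))).

Definition atom_range_formula : formula :=
  fOr (fOr (fEq y (zeroT y)) (fAnd (fLe v y) (fAnd (fNe v (zeroT y)) (fNe v y))))
      (fAnd (fEq (tcomp y u) (zeroT y))
            (fImp (fLe s j) (fImp (fEq (tcomp y s) (zeroT y)) (fLe s u)))).

Definition eq_laws_formula : formula :=
  fAnd (fEq (tcomp (tcomp a b) t) (tcomp a (tcomp b t)))
 (fAnd (fEq (zeroT a) (zeroT b))
 (fAnd (fEq (tcomp (zeroT t) b) (zeroT t))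
 (fAnd (fEq (tcomp a (zeroT t)) (zeroT t))
 (fAnd (fImp (fLe a b) (fEq a (tcomp (domT a) b)))
 (fAnd (fLe (tcomp (domT a) b) b)
 (fAnd (fLe (tcomp t (tmeet a b)) (tcomp t a))
 (fAnd (fLe (tcomp t (tmeet a b)) (tcomp t b))
 (fAnd (fImp (fEq (tcomp t a) (tcomp t b)) (fEq (tcomp t (tmeet a b)) (tcomp t a)))
 (fAnd (fLe (tcomp t (tant a)) t)
 (fAnd (fImp (fEq (tcomp t a) (zeroT a))
         (fImp (fEq (tcomp t (tant a)) (zeroT a)) (fEq t (zeroT a))))
 (fAnd (fEq (tcomp a (tant (zeroT t))) a)
 (fAnd (fImp (fEq (tcomp (tant (tmeet a b)) a) (zeroT a)) (fEq (tmeet a b) a))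
       (fImp (fEq (tcomp (tant (tmeet a b)) b) (zeroT a)) (fEq (tmeet a b) b)))))))))))))).

End Sentence.

Definition complete_rep_sentence : formula :=
  foralls [0; 1; 2] (existss [3; 4; 5] (foralls [6; 7; 8; 9; 10]
    (fAnd atomic_formula (fAnd atom_range_formula eq_laws_formula)))).

Lemma complete_rep_sentence_closed : sentence complete_rep_sentence.
Proof. reflexivity. Qed.

Lemma complete_rep_sentence_AEA : AEA_form complete_rep_sentence.
Proof.
  exists [0; 1; 2], [3; 4; 5], [6; 7; 8; 9; 10],
    (fAnd atomic_formula (fAnd atom_range_formula eq_laws_formula)).
  split; [cbv; tauto | reflexivity].
Qed.

Definition atomic_clause (M : CMAStruct) (c x w : M) : Prop :=
  c = zeroA M c \/ (op_comp M x c <> zeroA M c /\ (leA M w x -> w = zeroA M c \/ w = x)).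

Definition atom_range_clause (M : CMAStruct) (y j u v s : M) : Prop :=
  (y = zeroA M y \/ (leA M v y /\ v <> zeroA M y /\ v <> y)) \/
  (op_comp M y u = zeroA M y /\
   (leA M s j -> op_comp M y s = zeroA M y -> leA M s u)).

Definition eq_laws_clause (M : CMAStruct) (a b t : M) : Prop :=
  op_comp M (op_comp M a b) t = op_comp M a (op_comp M b t) /\
  zeroA M a = zeroA M b /\
  op_comp M (zeroA M t) b = zeroA M t /\
  op_comp M a (zeroA M t) = zeroA M t /\
  (leA M a b -> a = op_comp M (domA M a) b) /\
  leA M (op_comp M (domA M a) b) b /\
  leA M (op_comp M t (op_meet M a b)) (op_comp M t a) /\
  leA M (op_comp M t (op_meet M a b)) (op_comp M t b) /\
  (op_comp M t a = op_comp M t b -> op_comp M t (op_meet M a b) = op_comp M t a) /\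
  leA M (op_comp M t (op_ant M a)) t /\
  (op_comp M t a = zeroA M a -> op_comp M t (op_ant M a) = zeroA M a -> t = zeroA M a) /\
  op_comp M a (op_ant M (zeroA M t)) = a /\
  (op_comp M (op_ant M (op_meet M a b)) a = zeroA M a -> op_meet M a b = a) /\
  (op_comp M (op_ant M (op_meet M a b)) b = zeroA M a -> op_meet M a b = b).

Definition complete_rep_prop (M : CMAStruct) : Prop :=
  forall c y j : M, exists x u v : M, forall w s a b t : M,
    atomic_clause M c x w /\ atom_range_clause M y j u v s /\ eq_laws_clause M a b t.

Lemma models_complete_rep_sentence (M : CMAStruct) (m : M) :
  models M complete_rep_sentence <-> complete_rep_prop M.
Proof. split; [intro H; exact (H (fun _ => m)) | intros H e; exact H]. Qed.

Set Implicit Arguments.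

Record eq_laws (M : CMAStruct) : Prop := {
  comp_assoc : forall a b t : M, op_comp M (op_comp M a b) t = op_comp M a (op_comp M b t);
  zeroA_uniq : forall a b : M, zeroA M a = zeroA M b;
  zeroA_comp : forall t b : M, op_comp M (zeroA M t) b = zeroA M t;
  comp_zeroA : forall a t : M, op_comp M a (zeroA M t) = zeroA M t;
  le_dom_comp : forall a b : M, leA M a b -> a = op_comp M (domA M a) b;
  dom_comp_le : forall a b : M, leA M (op_comp M (domA M a) b) b;
  comp_meet_lel : forall t a b : M, leA M (op_comp M t (op_meet M a b)) (op_comp M t a);
  comp_meet_ler : forall t a b : M, leA M (op_comp M t (op_meet M a b)) (op_comp M t b);
  comp_meet_of_eq : forall t a b : M,
    op_comp M t a = op_comp M t b -> op_comp M t (op_meet M a b) = op_comp M t a;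
  comp_ant_le : forall t a : M, leA M (op_comp M t (op_ant M a)) t;
  zeroA_of_comp_ant : forall t a : M, op_comp M t a = zeroA M a ->
    op_comp M t (op_ant M a) = zeroA M a -> t = zeroA M a;
  comp_ant_zeroA : forall a t : M, op_comp M a (op_ant M (zeroA M t)) = a;
  meet_eql_of_ant : forall a b : M,
    op_comp M (op_ant M (op_meet M a b)) a = zeroA M a -> op_meet M a b = a;
  meet_eqr_of_ant : forall a b : M,
    op_comp M (op_ant M (op_meet M a b)) b = zeroA M a -> op_meet M a b = b
}.

Record laws (M : CMAStruct) : Prop := {
  laws_eq :> eq_laws M;
  atomic : forall c : M, c <> zeroA M c -> exists x : M,
    op_comp M x c <> zeroA M c /\ forall w, leA M w x -> w = zeroA M c \/ w = x;
  atom_range : forall y j : M, ~ atomA M (zeroA M y) y \/ exists u : M,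
    op_comp M y u = zeroA M y /\
    forall s, leA M s j -> op_comp M y s = zeroA M y -> leA M s u
}.

Local Ltac from_clause H a b t :=
  let Hc := fresh in pose proof (H a b t) as Hc; red in Hc; decompose record Hc; auto.

Lemma eq_laws_iff_clause (M : CMAStruct) (m : M) :
  eq_laws M <-> forall a b t : M, eq_laws_clause M a b t.
Proof.
  split; [intros [] a b t; repeat split; auto | intro H; split].
  - intros a b t. from_clause H a b t.
  - intros a b. from_clause H a b m.
  - intros t b. from_clause H m b t.
  - intros a t. from_clause H a m t.
  - intros a b. from_clause H a b m.
  - intros a b. from_clause H a b m.
  - intros t a b. from_clause H a b t.
  - intros t a b. from_clause H a b t.
  - intros t a b. from_clause H a b t.
  - intros t a. from_clause H a m t.
  - intros t a. from_clause H a m t.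
  - intros a t. from_clause H a m t.
  - intros a b. from_clause H a b m.
  - intros a b. from_clause H a b m.
Qed.

Lemma laws_iff_complete_rep_prop (M : CMAStruct) (m : M) : laws M <-> complete_rep_prop M.
Proof.
  split.
  - intros L c y j.
    assert (Hx : exists x, forall w, atomic_clause M c x w).
    { destruct (classic (c = zeroA M c)) as [Hc | Hc]; [exists c; left; exact Hc|].
      destruct (atomic L Hc) as (x & Hxc & Hx). exists x. right. auto. }
    assert (Huv : exists u v, forall s, atom_range_clause M y j u v s).
    { destruct (atom_range L y j) as [Hna | (u & Hyu & Hu)]; [|exists u, y; right; auto].
      exists y. apply NNPP. intro H. apply Hna. split.
      - intro Hy. apply H. exists y. left. left. exact Hy.
      - intros w Hw. apply NNPP. intro Hw'. apply H. exists w. left. right. tauto. }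
    destruct Hx as [x Hx], Huv as (u & v & Huv). exists x, u, v. intros w s a b t.
    split; [apply Hx | split; [apply Huv | apply (eq_laws_iff_clause M m), L]].
  - intro H. split.
    + apply (eq_laws_iff_clause M m). intros a b t.
      destruct (H m m m) as (x & u & v & Hc). apply (Hc m m a b t).
    + intros c Hc. destruct (H c m m) as (x & u & v & Hx). exists x. split.
      * destruct (Hx m m m m m) as [[Hc0 | [Hxc _]] _]; [contradiction | exact Hxc].
      * intros w Hw. destruct (Hx w m m m m) as [[Hc0 | [_ Hw']] _]; [contradiction | auto].
    + intros y j. destruct (H m y j) as (x & u & v & Hr).
      destruct (classic (y = zeroA M y \/ (leA M v y /\ v <> zeroA M y /\ v <> y)))
        as [Hna | Ha].
      * left. intros [Hy0 Hy]. destruct Hna as [Hy0' | (Hv & Hv0 & Hvy)]; [contradiction|].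
        destruct (Hy v Hv); contradiction.
      * right. exists u. destruct (Hr m m m m m) as [_ [[Hna | [Hyu _]] _]]; [contradiction|].
        split; [exact Hyu|]. intros s Hs Hys.
        destruct (Hr m s m m m) as [_ [[Hna | [_ Hsu]] _]]; [contradiction | auto].
Qed.

Section Representation.

Variables (M : CMAStruct) (X : Type) (th : M -> rel X).
Hypothesis R : representation M X th.

Lemma th_functional a x y y' : th a x y -> th a x y' -> y = y'.
Proof. destruct R as (H & _). apply H. Qed.

Lemma th_inj a b : (forall x y, th a x y <-> th b x y) -> a = b.
Proof. destruct R as (_ & H & _). apply H. Qed.

Lemma th_comp a b x y : th (op_comp M a b) x y <-> exists w, th a x w /\ th b w y.
Proof. destruct R as (_ & _ & H & _). apply H. Qed.

Lemma th_meet a b x y : th (op_meet M a b) x y <-> th a x y /\ th b x y.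
Proof. destruct R as (_ & _ & _ & H & _). apply H. Qed.

Lemma th_ant a x y : th (op_ant M a) x y <-> x = y /\ ~ (exists w, th a x w).
Proof. destruct R as (_ & _ & _ & _ & H & _). apply H. Qed.

Lemma th_dom a x y : th (domA M a) x y <-> x = y /\ exists w, th a x w.
Proof.
  unfold domA. rewrite th_ant. setoid_rewrite th_ant. split.
  - intros [<- H]. split; [reflexivity|]. apply NNPP. intro H'. eauto.
  - intros [<- [w Hw]]. split; [reflexivity|]. intros (v & <- & H). eauto.
Qed.

Lemma th_ant_comp v d x y :
  th (op_comp M (op_ant M v) d) x y <-> ~ (exists w, th v x w) /\ th d x y.
Proof.
  rewrite th_comp. setoid_rewrite th_ant. split.
  - intros (w & (<- & H) & Hd). auto.
  - intros [H Hd]. eauto.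
Qed.

Lemma th_dom_comp v d x y :
  th (op_comp M (domA M v) d) x y <-> (exists w, th v x w) /\ th d x y.
Proof.
  rewrite th_comp. setoid_rewrite th_dom. split.
  - intros (w & (<- & H) & Hd). auto.
  - intros [H Hd]. eauto.
Qed.

Lemma th_zeroA t x y : ~ th (zeroA M t) x y.
Proof. unfold zeroA. rewrite th_ant_comp. intros [H Ht]. eauto. Qed.

Lemma eq_zeroA_iff v t : v = zeroA M t <-> forall x y, ~ th v x y.
Proof.
  split.
  - intros ->. apply th_zeroA.
  - intro H. apply th_inj. intros x y. split; intro Hxy.
    + exfalso. eapply H; eauto.
    + exfalso. eapply th_zeroA; eauto.
Qed.

Lemma th_nonempty c t : c <> zeroA M t -> exists p q, th c p q.
Proof. intro Hc. apply NNPP. intro H. apply Hc, eq_zeroA_iff. eauto. Qed.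

Lemma leA_iff a b : leA M a b <-> forall x y, th a x y -> th b x y.
Proof.
  unfold leA. split.
  - intros H x y Ha. rewrite <- H, th_meet in Ha. tauto.
  - intro H. apply th_inj. intros x y. rewrite th_meet. firstorder.
Qed.

Lemma eq_of_le_ant_comp_empty v d : leA M v d ->
  (forall x y, ~ th (op_comp M (op_ant M v) d) x y) -> v = d.
Proof.
  rewrite leA_iff. intros Hvd H. apply th_inj. intros x y. split; [apply Hvd|]. intro Hd.
  destruct (classic (exists w, th v x w)) as [[w Hw] | Hn].
  - rewrite (th_functional Hd (Hvd _ _ Hw)). exact Hw.
  - exfalso. apply (H x y). apply th_ant_comp. auto.
Qed.

Local Ltac th_simpl := repeat (setoid_rewrite th_comp || setoid_rewrite th_meet ||
                         setoid_rewrite th_ant || setoid_rewrite th_dom).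

Lemma eq_laws_of_rep : eq_laws M.
Proof.
  split.
  - intros a b t. apply th_inj. intros. th_simpl. firstorder.
  - intros a b. apply eq_zeroA_iff. apply th_zeroA.
  - intros t b. apply eq_zeroA_iff. intros x y. rewrite th_comp.
    intros (w & H & _). eapply th_zeroA; eauto.
  - intros a t. apply eq_zeroA_iff. intros x y. rewrite th_comp.
    intros (w & _ & H). eapply th_zeroA; eauto.
  - intros a b Hab. apply th_inj. intros x y. rewrite leA_iff in Hab. rewrite th_dom_comp. split.
    + intro Ha. eauto.
    + intros [[w Hw] Hb]. rewrite (th_functional Hb (Hab _ _ Hw)). exact Hw.
  - intros a b. apply leA_iff. intros x y. rewrite th_dom_comp. tauto.
  - intros t a b. apply leA_iff. intros x y. th_simpl. firstorder.
  - intros t a b. apply leA_iff. intros x y. th_simpl. firstorder.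
  - intros t a b Hab. apply th_inj. intros x y. th_simpl. split; [firstorder|].
    intros (w & Ht & Ha). exists w. repeat split; auto.
    assert (Hb : th (op_comp M t b) x y) by (rewrite <- Hab; apply th_comp; eauto).
    apply th_comp in Hb. destruct Hb as (w' & Ht' & Hb).
    rewrite (th_functional Ht Ht'). exact Hb.
  - intros t a. apply leA_iff. intros x y. th_simpl. intros (w & Ht & <- & _). exact Ht.
  - intros t a Ha Hna. rewrite eq_zeroA_iff in *. intros x y Ht.
    destruct (classic (exists w, th a y w)) as [[w Hw] | Hn].
    + apply (Ha x w). apply th_comp. eauto.
    + apply (Hna x y). apply th_comp. exists y. rewrite th_ant. auto.
  - intros a t. apply th_inj. intros x y. rewrite th_comp. setoid_rewrite th_ant. split.
    + intros (w & Ha & <- & _). exact Ha.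
    + intro Ha. exists y. repeat split; auto. intros [w Hw]. eapply th_zeroA; eauto.
  - intros a b H. apply eq_of_le_ant_comp_empty.
    + apply leA_iff. intros x y. rewrite th_meet. tauto.
    + apply eq_zeroA_iff with (t := a). auto.
  - intros a b H. apply eq_of_le_ant_comp_empty.
    + apply leA_iff. intros x y. rewrite th_meet. tauto.
    + apply eq_zeroA_iff with (t := a). auto.
Qed.


Hypothesis Cp : complete_rep M X th.

Lemma atom_through d p q : th d p q -> exists e,
  th e p q /\ leA M e d /\ forall w, leA M w e -> (forall x y, ~ th w x y) \/ w = e.
Proof.
  intro Hd. apply NNPP. intro Hn.
  pose (S s := leA M s d /\ ~ exists y, th s p y).
  assert (Hlub : is_lub M S d).
  { split; [now intros s [Hs _]|]. intros u Hu.
    (* [r], the part of [d] outside the domain of [d /\ u], turns out to lie in [S] and to be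
       empty, whence [d <= u]. *)
    pose (r := op_comp M (op_ant M (op_meet M d u)) d).
    assert (Hr : forall x y, th r x y <-> ~ (exists w, th (op_meet M d u) x w) /\ th d x y)
      by apply th_ant_comp.
    assert (Hrd : leA M r d) by (apply leA_iff; intros x y; rewrite Hr; tauto).
    assert (S_below_r_empty : forall s, leA M s r -> S s -> forall x y, ~ th s x y).
    { intros s Hsr Hs x y Hxy. pose proof (Hu s Hs) as Hsu.
      rewrite leA_iff in Hsr, Hsu. destruct (proj1 (Hr x y) (Hsr _ _ Hxy)) as [Hdu Hdxy].
      apply Hdu. exists y. apply th_meet. split; [exact Hdxy | auto]. }
    assert (Hrp : ~ exists y, th r p y).
    { intros [y Hy]. rewrite leA_iff in Hrd.
      rewrite (th_functional (Hrd _ _ Hy) Hd) in Hy.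
      apply Hn. exists r. split; [exact Hy|]. split; [apply leA_iff, Hrd|].
      intros w Hw. destruct (classic (exists y, th w p y)) as [Hwp | Hwp].
      - right. apply eq_of_le_ant_comp_empty; [exact Hw|]. apply S_below_r_empty.
        + apply leA_iff. intros x y'. rewrite th_ant_comp. tauto.
        + split.
          * apply leA_iff. intros x y'. rewrite th_ant_comp. intros [_ H]. auto.
          * intros [y' Hy']. apply th_ant_comp in Hy'. tauto.
      - left. apply S_below_r_empty; [exact Hw|]. split; [|exact Hwp].
        rewrite leA_iff in Hw |- *. auto. }
    apply eq_of_le_ant_comp_empty.
    - apply leA_iff. intros x y. rewrite th_meet. tauto.
    - apply S_below_r_empty; [apply leA_iff; auto | split; assumption]. }
  destruct (proj1 (Cp Hlub p q) Hd) as (s & [_ Hs] & Hsp). eauto.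
Qed.

Lemma atomic_rep c : c <> zeroA M c -> exists x : M,
  op_comp M x c <> zeroA M c /\ forall w, leA M w x -> w = zeroA M c \/ w = x.
Proof.
  intro Hc. destruct (th_nonempty _ Hc) as (p & q & Hpq).
  assert (Hp : th (domA M c) p p) by (apply th_dom; eauto).
  destruct (atom_through Hp) as (e & He & _ & He_atom). exists e. split.
  - rewrite eq_zeroA_iff. intro H. apply (H p q). apply th_comp. eauto.
  - intros w Hw. destruct (He_atom w Hw) as [H | H]; auto. left. apply eq_zeroA_iff, H.
Qed.

Lemma atom_ends_in_dom y f p q :
  (forall w, leA M w y -> w = zeroA M y \/ w = y) -> th y p q -> (exists w, th f q w) ->
  forall x v, th y x v -> exists w, th f v w.
Proof.
  intros Hy_atom Hpq Hq.
  pose (g := op_comp M y (op_ant M f)).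
  assert (Hg : leA M g y).
  { apply leA_iff. intros x v. unfold g. rewrite th_comp. setoid_rewrite th_ant.
    intros (w & Hw & <- & _). exact Hw. }
  intros x v Hxv. apply NNPP. intro Hv.
  destruct (Hy_atom g Hg) as [Hg0 | Hgy].
  - rewrite eq_zeroA_iff in Hg0. apply (Hg0 x v). apply th_comp. exists v. rewrite th_ant. auto.
  - assert (Hgpq : th g p q) by (rewrite Hgy; exact Hpq).
    unfold g in Hgpq. rewrite th_comp in Hgpq. destruct Hgpq as (w & Hw & Hwq).
    rewrite (th_functional Hw Hpq) in Hwq. apply th_ant in Hwq. tauto.
Qed.

(* For an atom [y] through [(p, q)], take [u] to be [j] restricted to the complement of the
   domain of an atom [f] of the identity through [(q, q)]. *)
Lemma atom_range_rep y j : ~ atomA M (zeroA M y) y \/ exists u : M,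
  op_comp M y u = zeroA M y /\
  forall s, leA M s j -> op_comp M y s = zeroA M y -> leA M s u.
Proof.
  destruct (classic (atomA M (zeroA M y) y)) as [[Hy0 Hy_atom] | Hna]; [right | left; exact Hna].
  destruct (th_nonempty _ Hy0) as (p & q & Hpq).
  assert (Hq : th (op_ant M (zeroA M y)) q q).
  { apply th_ant. split; [reflexivity|]. intros [w Hw]. eapply th_zeroA; eauto. }
  destruct (atom_through Hq) as (f & Hf & Hf_id & Hf_atom).
  assert (Hf_diag : forall x w, th f x w -> x = w).
  { rewrite leA_iff in Hf_id. intros x w Hxw. apply Hf_id, th_ant in Hxw. tauto. }
  pose proof (atom_ends_in_dom Hy_atom Hpq (ex_intro _ q Hf)) as Hy_ends.
  exists (op_comp M (op_ant M f) j). split.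
  - apply eq_zeroA_iff. intros x v. rewrite th_comp. setoid_rewrite th_ant_comp.
    intros (w & Hw & Hnf & _). exact (Hnf (Hy_ends _ _ Hw)).
  - intros s Hsj Hys. rewrite leA_iff in Hsj |- *. intros a b Hab. apply th_ant_comp.
    split; [|auto]. intros [w Hw]. rewrite <- (Hf_diag _ _ Hw) in Hw.
    assert (Hg : leA M (op_comp M (domA M s) f) f).
    { apply leA_iff. intros x v. rewrite th_dom_comp. tauto. }
    destruct (Hf_atom _ Hg) as [Hg0 | Hgf].
    + apply (Hg0 a a). apply th_dom_comp. eauto.
    + assert (Hsq : th (op_comp M (domA M s) f) q q) by (rewrite Hgf; exact Hf).
      apply th_dom_comp in Hsq. destruct Hsq as [[v Hv] _].
      rewrite eq_zeroA_iff in Hys. apply (Hys p v). apply th_comp. eauto.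
Qed.

Lemma laws_of_complete_rep : laws M.
Proof. split; [apply eq_laws_of_rep | apply atomic_rep | apply atom_range_rep]. Qed.

End Representation.

Section AtomRepresentation.

Unset Strict Implicit.

Variables (M : CMAStruct) (L : laws M) (z : M).
Hypothesis zeroA_z : forall t, zeroA M t = z.

Lemma z_comp b : op_comp M z b = z.
Proof. rewrite <- (zeroA_z z). apply (zeroA_comp L). Qed.

Lemma comp_z a : op_comp M a z = z.
Proof. rewrite <- (zeroA_z z). apply (comp_zeroA L). Qed.

Lemma le_z w : leA M w z -> w = z.
Proof. intro H. rewrite (le_dom_comp L H). apply comp_z. Qed.

Lemma comp_le x s j : leA M s j -> leA M (op_comp M x s) (op_comp M x j).
Proof.
  unfold leA. intro H. pose proof (comp_meet_ler L x s j) as H'. rewrite H in H'. exact H'.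
Qed.

Lemma atom_eq_of_le x w : atomA M z x -> leA M w x -> w <> z -> w = x.
Proof. intros [_ H] Hw Hwz. destruct (H w Hw); tauto. Qed.

Lemma atom_comp x a : atomA M z x -> op_comp M x a <> z -> atomA M z (op_comp M x a).
Proof.
  intros [_ Hx] Hxa. split; [exact Hxa|]. intros w Hw.
  rewrite (le_dom_comp L Hw), <- (comp_assoc L).
  destruct (Hx _ (dom_comp_le L w x)) as [-> | ->]; [left; apply z_comp | right; reflexivity].
Qed.

Lemma atom_comp_eq_of_le x a y : atomA M z x -> atomA M z y ->
  leA M y (op_comp M x a) -> op_comp M x a = y.
Proof.
  intros Hx Hy Hle. assert (Hxa : op_comp M x a <> z).
  { intro H. rewrite H in Hle. apply (proj1 Hy), le_z, Hle. }
  symmetry. apply (atom_eq_of_le (atom_comp Hx Hxa) Hle), Hy.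
Qed.

Lemma exists_atom_comp c : c <> z -> exists x, atomA M z x /\ op_comp M x c <> z.
Proof.
  intro Hc. rewrite <- (zeroA_z c) in Hc. destruct (atomic L Hc) as (x & Hxc & Hx).
  rewrite zeroA_z in Hxc, Hx. exists x. split; [|exact Hxc]. split; [|exact Hx].
  intros ->. apply Hxc, z_comp.
Qed.

Lemma ant_comp_zero_of_atoms e d :
  (forall x, atomA M z x -> op_comp M x e = op_comp M x d) -> op_comp M (op_ant M e) d = z.
Proof.
  intro Hed. apply NNPP. intro Hc. destruct (exists_atom_comp Hc) as (x & Hx & Hxc).
  assert (Hxe : op_comp M x (op_ant M e) = x).
  { apply (atom_eq_of_le Hx (comp_ant_le L x e)). intro H.
    apply Hxc. rewrite <- (comp_assoc L), H. apply z_comp. }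
  apply Hxc. rewrite <- (comp_assoc L), Hxe, <- Hed; [|exact Hx].
  rewrite <- Hxe at 1. rewrite (comp_assoc L). fold (zeroA M e). rewrite zeroA_z. apply comp_z.
Qed.

Definition atom_points := {x : M | atomA M z x}.

Definition atom_rep (a : M) : rel atom_points :=
  fun x y => op_comp M (proj1_sig x) a = proj1_sig y.

Lemma atom_points_eq (x y : atom_points) : proj1_sig x = proj1_sig y -> x = y.
Proof. apply eq_sig_hprop. intros. apply proof_irrelevance. Qed.

Lemma atom_rep_comp_eq a b : rel_eq (atom_rep a) (atom_rep b) ->
  forall x, atomA M z x -> op_comp M x a = op_comp M x b.
Proof.
  intros Hab x Hx.
  destruct (classic (op_comp M x a = z)) as [Ha | Ha].
  - destruct (classic (op_comp M x b = z)) as [Hb | Hb]; [congruence|].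
    exact (proj2 (Hab (exist _ x Hx) (exist _ _ (atom_comp Hx Hb))) eq_refl).
  - symmetry. exact (proj1 (Hab (exist _ x Hx) (exist _ _ (atom_comp Hx Ha))) eq_refl).
Qed.

Lemma atom_rep_inj a b : rel_eq (atom_rep a) (atom_rep b) -> a = b.
Proof.
  intro Hab. pose proof (atom_rep_comp_eq Hab) as H.
  assert (Ha : op_meet M a b = a).
  { apply (meet_eql_of_ant L). rewrite zeroA_z. apply ant_comp_zero_of_atoms.
    intros x Hx. exact (comp_meet_of_eq L _ _ _ (H x Hx)). }
  assert (Hb : op_meet M a b = b).
  { apply (meet_eqr_of_ant L). rewrite zeroA_z. apply ant_comp_zero_of_atoms.
    intros x Hx. rewrite (comp_meet_of_eq L _ _ _ (H x Hx)). exact (H x Hx). }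
  congruence.
Qed.

Lemma atom_rep_comp a b : rel_eq (atom_rep (op_comp M a b)) (rcomp (atom_rep a) (atom_rep b)).
Proof.
  intros [x Hx] [y Hy]. unfold atom_rep, rcomp; simpl. split.
  - intro H. assert (Hxa : op_comp M x a <> z).
    { intro H0. apply (proj1 Hy). rewrite <- H, <- (comp_assoc L), H0. apply z_comp. }
    exists (exist _ _ (atom_comp Hx Hxa)). simpl. rewrite (comp_assoc L). auto.
  - intros ([w Hw] & H1 & H2). simpl in *. rewrite <- (comp_assoc L). congruence.
Qed.

Lemma atom_rep_meet a b : rel_eq (atom_rep (op_meet M a b)) (rmeet (atom_rep a) (atom_rep b)).
Proof.
  intros [x Hx] [y Hy]. unfold atom_rep, rmeet; simpl. split.
  - intros <-. split; apply (atom_comp_eq_of_le Hx); try apply (atom_comp Hx);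
      try (intro H; rewrite H in Hy; exact (proj1 Hy eq_refl));
      [apply (comp_meet_lel L) | apply (comp_meet_ler L)].
  - intros [H1 H2]. rewrite (comp_meet_of_eq L); congruence.
Qed.

Lemma atom_rep_ant a : rel_eq (atom_rep (op_ant M a)) (rant (atom_rep a)).
Proof.
  intros [x Hx] [y Hy]. unfold atom_rep, rant; simpl. split.
  - intro H. assert (Hyx : y = x).
    { rewrite <- H. apply (atom_eq_of_le Hx (comp_ant_le L x a)). rewrite H. apply Hy. }
    split; [apply atom_points_eq; symmetry; exact Hyx|]. intros ([w Hw] & Hxw). simpl in Hxw.
    apply (proj1 Hw). rewrite <- Hxw, <- Hyx at 1. rewrite <- H, (comp_assoc L). fold (zeroA M a).
    rewrite zeroA_z. apply comp_z.
  - intros [Hxy Hn]. apply (f_equal (@proj1_sig _ _)) in Hxy. simpl in Hxy. subst y.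
    assert (Hxa : op_comp M x a = z).
    { apply NNPP. intro H. apply Hn. exists (exist _ _ (atom_comp Hx H)). reflexivity. }
    destruct (proj2 Hx _ (comp_ant_le L x a)) as [H | H]; [|exact H].
    exfalso. apply (proj1 Hx). rewrite <- (zeroA_z a).
    apply (zeroA_of_comp_ant L); rewrite zeroA_z; assumption.
Qed.

Lemma atom_rep_representation : representation M atom_points atom_rep.
Proof.
  split; [|split; [|split; [|split; [|split]]]].
  - intros a x y y' H1 H2. apply atom_points_eq. unfold atom_rep in *. congruence.
  - exact atom_rep_inj.
  - exact atom_rep_comp.
  - exact atom_rep_meet.
  - exact atom_rep_ant.
  - intros x. exists (op_ant M (zeroA M z)), x. left. apply (comp_ant_zeroA L).
Qed.

Lemma atom_rep_complete : complete_rep M atom_points atom_rep.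
Proof.
  intros S j [Hub Hleast] [x Hx] [y Hy]. unfold atom_rep; simpl. split.
  - intro Hxj. apply NNPP. intro Hn.
    destruct (atom_range L x j) as [Hna | (u & Hxu & Hu)].
    { apply Hna. rewrite zeroA_z. exact Hx. }
    rewrite zeroA_z in Hxu, Hu.
    assert (Hu_ub : forall s, S s -> leA M s u).
    { intros s Hs. apply Hu; [exact (Hub s Hs)|]. apply NNPP. intro Hxs.
      apply Hn. exists s. split; [exact Hs|]. simpl. apply (atom_eq_of_le Hy); [|exact Hxs].
      rewrite <- Hxj. apply comp_le, Hub, Hs. }
    apply (proj1 Hy), le_z. rewrite <- Hxj, <- Hxu. apply comp_le, Hleast, Hu_ub.
  - intros (s & Hs & Hxs). simpl in Hxs. apply (atom_comp_eq_of_le Hx Hy).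
    rewrite <- Hxs. apply comp_le, Hub, Hs.
Qed.

End AtomRepresentation.


Lemma laws_iff_completely_representable (M : CMAStruct) (m : M) :
  laws M <-> completely_representable M.
Proof.
  split.
  - intro L. pose proof (zeroA_uniq L) as Hz.
    exists (@atom_points M (zeroA M m)), (@atom_rep M (zeroA M m)).
    split; [apply atom_rep_representation | apply atom_rep_complete]; auto.
  - intros (X & th & R & Cp). exact (laws_of_complete_rep R Cp).
Qed.

Theorem mainTheorem17 :
  exists phi : formula,
    sentence phi /\ AEA_form phi /\
    forall M : CMAStruct, inhabited M ->
      (models M phi <-> completely_representable M).
Proof.
  exists complete_rep_sentence.
  split; [exact complete_rep_sentence_closed|].
  split; [exact complete_rep_sentence_AEA|].
  intros M [m].
  rewrite (models_complete_rep_sentence M m), <- (laws_iff_complete_rep_prop M m).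
  apply laws_iff_completely_representable, m.
Qed.
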